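(* For relatively prime integers $r, s$ put $u = r^2 + s^2$, $v = 2r^2 - s^2$, and let \[ \mathcal{S} = \{\pm u(u+v),\ \pm u(u-v),\ \pm v(u+v),\ \pm v(u-v)\}. \] Then for all but finitely many pairs $(r,s)$ of relatively prime integers with $r \neq 0$, the eight elements of $\mathcal{S}$ represent eight pairwise distinct classes in $\mathbb{Q}^\times/(\mathbb{Q}^\times)^2$.
   Context: $\mathbb{Q}^\times/(\mathbb{Q}^\times)^2$ denotes the group of nonzero rationals modulo nonzero squares; two nonzero rationals represent the same class iff their quotient is a square of a rational. *)

From mathcomp Require Import all_boot all_order all_algebra.
Set Implicit Arguments. Unset Strict Implicit. Unset Printing Implicit Defensive.
Import Order.TTheory GRing.Theory Num.Theory.
Local Open Scope ring_scope.

Definition sq_equiv (a b : rat) : Prop := exists q : rat, q != 0 /\ a = b * q ^+ 2.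

Definition S_list (r s : int) : seq int :=
  let u := r ^+ 2 + s ^+ 2 in
  let v := 2 * r ^+ 2 - s ^+ 2 in
  [:: u * (u + v); - (u * (u + v)); u * (u - v); - (u * (u - v));
      v * (u + v); - (v * (u + v)); v * (u - v); - (v * (u - v))].

Definition distinct_sq_classes (l : seq rat) : Prop :=
  (forall x, x \in l -> x != 0) /\
  (forall i j : nat, (i < size l)%N -> (j < size l)%N -> i != j ->
     ~ sq_equiv (nth 0 l i) (nth 0 l j)).

(* Write u = r^2 + s^2, v = 2r^2 - s^2 and w = u - v = 2s^2 - r^2; note u + v = 3r^2.
   Every element of S is (-1)^e * (u or v) * (u + v or u - v), indexed by three bits
   (e, a, b), and the product of two elements with bits (e, a, b), (e', a', b') is
       (-1)^(e xor e') * (uv)^(a xor a') * (3w)^(b xor b') * z^2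
   for a nonzero integer z.  Two nonzero rationals are in the same square class iff
   their product is a rational square, and an integer that is a rational square is an
   integer square, so it suffices that -1, +-uv, +-3w and +-3uvw are not squares.
   For coprime r, s the number 3 divides none of u, v, w (all are congruent to +-u mod 3),
   which disposes of 3w and 3uvw.  If uv were +- a square then, depending on the sign
   of v, either a congruence modulo 4 fails, or (r^2 + s^2)(s^2 - 2r^2) = t^2 with
   r > 0, which Fermat's infinite descent rules out.  Hence the theorem holds with an
   empty exceptional set. *)

From mathcomp Require Import all_boot all_order all_algebra.
From mathcomp Require Import zify ring.
Import Order.TTheory GRing.Theory Num.Theory.

Set Implicit Arguments.
Unset Strict Implicit.
Unset Printing Implicit Defensive.

Lemma gcdn_expn (a b k : nat) : gcdn (a ^ k) (b ^ k) = gcdn a b ^ k.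
Proof.
have [g0 | g_gt0] := posnP (gcdn a b).
  move: g0 (dvdn_gcdl a b) (dvdn_gcdr a b) => ->.
  by rewrite !dvd0n => /eqP-> /eqP->; rewrite gcdnn.
set g := gcdn a b in g_gt0 *.
have [a' def_a] : exists a', a = a' * g := dvdnP (dvdn_gcdl a b).
have [b' def_b] : exists b', b = b' * g := dvdnP (dvdn_gcdr a b).
have co_ab' : coprime a' b'.
  have : gcdn a' b' * g = 1 * g by rewrite mul1n muln_gcdl -def_a -def_b.
  by move/eqP; rewrite eqn_pmul2r.
clearbody g; rewrite def_a def_b !expnMn -muln_gcdl.
by rewrite (eqP (coprimeXr k (coprimeXl k co_ab'))) mul1n.
Qed.

Lemma coprime_mul_pow (x y z k : nat) : 0 < k -> coprime x y -> x * y = z ^ k ->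
  x = gcdn x z ^ k /\ y = gcdn y z ^ k.
Proof.
move=> k_gt0.
have factor_pow a b : coprime a b -> a * b = z ^ k -> a = gcdn a z ^ k.
  move=> co_ab ab_eq; rewrite -gcdn_expn -ab_eq -(prednK k_gt0) expnS -muln_gcdr.
  by rewrite (eqP (coprimeXl _ co_ab)) muln1.
move=> co_xy xy_eq; split; first exact: factor_pow co_xy xy_eq.
by apply: factor_pow (etrans (mulnC _ _) xy_eq); rewrite coprime_sym.
Qed.

Lemma coprime_split_prime (c e X Y P : nat) :
  prime c -> 0 < e -> coprime X Y -> X * Y = c * P ^ e ->
  exists m n, [/\ P = m * n, coprime m n, ~~ (c %| n) &
    (X = c * m ^ e /\ Y = n ^ e) \/ (X = n ^ e /\ Y = c * m ^ e)].
Proof.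
move=> c_prime e_gt0.
wlog c_dvd_X : X Y / c %| X.
  move=> directed co_XY XY_eq.
  have : c %| X * Y by rewrite XY_eq dvdn_mulr.
  rewrite Euclid_dvdM // => /orP[c_dvd_X | c_dvd_Y]; first exact: directed.
  rewrite coprime_sym mulnC in co_XY XY_eq.
  have [m [n [-> co_mn c_n [] [-> ->]]]] := directed Y X c_dvd_Y co_XY XY_eq;
    by exists m, n; split; [|done|done|tauto].
move=> co_XY XY_eq; have [X' def_X] := dvdnP c_dvd_X; rewrite mulnC in def_X.
have c_gt0 := prime_gt0 c_prime.
have X'Y_eq : X' * Y = P ^ e.
  by apply/eqP; rewrite -(eqn_pmul2l c_gt0) mulnA -def_X XY_eq.
have co_X'Y : coprime X' Y by apply: coprime_dvdl co_XY; rewrite def_X dvdn_mull.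
have [X'_pow Y_pow] := coprime_mul_pow e_gt0 co_X'Y X'Y_eq.
exists (gcdn X' P), (gcdn Y P); split.
- by apply/eqP; rewrite -(eqn_exp2r _ _ e_gt0) expnMn -X'_pow -Y_pow X'Y_eq.
- by move: co_X'Y; rewrite {1}X'_pow {1}Y_pow coprime_pexpl // coprime_pexpr.
- apply/negP => c_dvd_n.
  have : c %| gcdn X Y by rewrite dvdn_gcd c_dvd_X Y_pow dvdn_exp.
  by rewrite (eqP co_XY) Euclid_dvd1.
- by left; rewrite def_X -X'_pow -Y_pow.
Qed.

Lemma coprime_sq_diff (a b N : nat) : coprime a b -> a ^ 2 = b ^ 2 + 4 * N ->
  exists x y, [/\ coprime x y, x * y = N, a = x + y & y = b + x].
Proof.
move=> co_ab sq_eq.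
have b_le_a : b <= a by rewrite -(leq_exp2r _ _ (isT : 0 < 2)) sq_eq leq_addr.
have even_ab : ~~ odd (a - b).
  have : odd (a ^ 2) = odd (b ^ 2) by rewrite sq_eq oddD oddM /= addbF.
  by rewrite oddB // !oddX /= => ->; rewrite addbb.
have [x a_eq] : exists x, a = b + 2 * x.
  by exists (a - b)./2; have := even_halfK even_ab; lia.
exists x, (b + x); split; [|nia|lia|done].
have g_x := dvdn_gcdl x (b + x); have g_b := dvdn_gcdr x (b + x).
rewrite (dvdn_addl _ g_x) in g_b.
by rewrite /coprime -dvdn1 -(eqP co_ab) dvdn_gcd g_b a_eq dvdn_add // dvdn_mull.
Qed.

Lemma coprime_sq_add (a b N : nat) : coprime b N -> a ^ 2 = b ^ 2 + N -> coprime a b.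
Proof.
move=> co_bN sq_eq; rewrite coprime_sym /coprime -dvdn1 -(eqP co_bN) dvdn_gcd dvdn_gcdl /=.
have g_a2 : gcdn b a %| a ^ 2 by rewrite dvdn_exp // dvdn_gcdr.
by rewrite sq_eq dvdn_addr // dvdn_exp // dvdn_gcdl in g_a2.
Qed.

Lemma coprime_even_odd (r s : nat) : coprime r s -> ~~ odd r -> odd s.
Proof. by move=> co_rs r_even; rewrite -coprime2n (coprime_dvdl _ co_rs) // dvdn2. Qed.

(* Residues modulo 3 and modulo 4 are computed in the finite rings 'F_3 and 'Z_4,
   into which nat maps by the ring morphism n |-> n%:R. *)
Lemma dvdn3_Fp (n : nat) : (3 %| n) = ((n%:R : 'F_3) == 0)%R.
Proof. by rewrite (dvdn_pcharf (pchar_Fp (isT : prime 3))). Qed.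

Lemma odd_Z4 (n : nat) : odd n = odd (n%:R : 'Z_4)%R.
Proof. by rewrite val_Zp_nat // odd_mod. Qed.

(* Since -1 is not a square mod 3, 3 | r^2 + s^2 forces 3 | r and 3 | s. *)
Lemma dvd3_sum_sq (r s : nat) : 3 %| r ^ 2 + s ^ 2 -> (3 %| r) && (3 %| s).
Proof.
rewrite !dvdn3_Fp natrD !natrX.
by move: (r%:R : 'F_3)%R (s%:R : 'F_3)%R; do 2!case=> [[|[|[|?]]] ?].
Qed.

Lemma coprime_ndvd3_sum_sq (r s : nat) : coprime r s -> ~~ (3 %| r ^ 2 + s ^ 2).
Proof.
move=> co_rs; apply/negP => /dvd3_sum_sq/andP[dvd3_r dvd3_s].
by have := dvdn_gcd 3 r s; rewrite (eqP co_rs) dvd3_r dvd3_s.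
Qed.

(* The obstruction modulo 3 met in the second branch of the descent. *)
Lemma mod3_obstruction (q m n : nat) :
  ~~ (3 %| q) -> q ^ 2 + m ^ 2 * n ^ 2 + n ^ 4 != 2 * m ^ 4.
Proof.
rewrite dvdn3_Fp => q_ndvd; apply/negP => /eqP E.
have : (q%:R ^+ 2 + m%:R ^+ 2 * n%:R ^+ 2 + n%:R ^+ 4 != 2 * m%:R ^+ 4 :> 'F_3)%R.
  by move: (q%:R : 'F_3)%R (m%:R : 'F_3)%R (n%:R : 'F_3)%R q_ndvd;
    do 3!case=> [[|[|[|?]]] ?].
by rewrite -!natrX -!natrM -!natrD E eqxx.
Qed.

(* For odd r, (r^2 + s^2)(s^2 - 2r^2) = t^2 is impossible modulo 4. *)
Lemma mod4_obstruction_minus (r s t : nat) :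
  odd r -> t ^ 2 + r ^ 2 * s ^ 2 + 2 * r ^ 4 != s ^ 4.
Proof.
rewrite odd_Z4 => r_odd; apply/negP => /eqP E.
have : (t%:R ^+ 2 + r%:R ^+ 2 * s%:R ^+ 2 + 2 * r%:R ^+ 4 != s%:R ^+ 4 :> 'Z_4)%R.
  by move: (r%:R : 'Z_4)%R (s%:R : 'Z_4)%R (t%:R : 'Z_4)%R r_odd;
    do 3!case=> [[|[|[|[|?]]]] ?].
by rewrite -!natrX -!natrM -!natrD E eqxx.
Qed.

(* If r or s is odd, (r^2 + s^2)(2r^2 - s^2) = t^2 is impossible modulo 4. *)
Lemma mod4_obstruction_plus (r s t : nat) :
  odd r || odd s -> t ^ 2 + s ^ 4 != 2 * r ^ 4 + r ^ 2 * s ^ 2.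
Proof.
rewrite (odd_Z4 r) (odd_Z4 s) => rs_odd; apply/negP => /eqP E.
have : (t%:R ^+ 2 + s%:R ^+ 4 != 2 * r%:R ^+ 4 + r%:R ^+ 2 * s%:R ^+ 2 :> 'Z_4)%R.
  by move: (r%:R : 'Z_4)%R (s%:R : 'Z_4)%R (t%:R : 'Z_4)%R rs_odd;
    do 3!case=> [[|[|[|[|?]]]] ?].
by rewrite -!natrX -!natrM -!natrD E eqxx.
Qed.

Lemma three_mul_not_square (Z M : nat) : ~~ (3 %| Z) -> 3 * Z != M ^ 2.
Proof.
move=> Z_ndvd3; apply/negP => /eqP sq.
have : 3 %| M ^ 2 by rewrite -sq dvdn_mulr.
rewrite Euclid_dvdX // andbT => /dvdnP[K M_eq].
have Z_eq : Z = 3 * K ^ 2 by nia.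
by rewrite Z_eq dvdn_mulr in Z_ndvd3.
Qed.

(* First half of a descent step for t^2 = (r^2 + s^2)(s^2 - 2r^2) with r, s coprime:
   r is even, s is odd, and the coprime factors r^2 + s^2 and s^2 - 2r^2 are squares
   a^2 and b^2 (their gcd divides 3, which does not divide r^2 + s^2). *)
Lemma descent_squares (r s t : nat) :
  coprime r s -> t ^ 2 + r ^ 2 * s ^ 2 + 2 * r ^ 4 = s ^ 4 ->
  [/\ ~~ odd r, odd s & exists a b,
    [/\ coprime a b, r ^ 2 + s ^ 2 = a ^ 2 & a ^ 2 = b ^ 2 + 3 * r ^ 2]].
Proof.
move=> co_rs sol.
have r_even : ~~ odd r by apply/negP => /(mod4_obstruction_minus s t); rewrite sol eqxx.
have s_odd := coprime_even_odd co_rs r_even.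
have [V V_eq] : exists V, V + 2 * r ^ 2 = s ^ 2 by exists (s ^ 2 - 2 * r ^ 2); nia.
have UV_eq : (r ^ 2 + s ^ 2) * V = t ^ 2 by nia.
have V_ndvd3 : ~~ (3 %| V).
  apply: contra (coprime_ndvd3_sum_sq co_rs) => dvd3_V.
  by rewrite -V_eq addnCA -mulSn dvdn_add ?dvdn_mulr.
have co_rV : coprime r V.
  rewrite /coprime -(gcdnMDl (2 * r)) (_ : 2 * r * r + V = s ^ 2); last by lia.
  by rewrite -/(coprime r (s ^ 2)) coprime_pexpr.
have co_UV : coprime (r ^ 2 + s ^ 2) V.
  rewrite (_ : r ^ 2 + s ^ 2 = V + 3 * r ^ 2); last by lia.
  rewrite coprime_sym /coprime gcdnDl -/(coprime V (3 * r ^ 2)) coprimeMr.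
  by rewrite coprime_sym prime_coprime // V_ndvd3 coprime_pexpr // coprime_sym.
set U := r ^ 2 + s ^ 2 in UV_eq co_UV *.
have [U_sq V_sq] := coprime_mul_pow (isT : 0 < 2) co_UV UV_eq.
split=> //; exists (gcdn U t), (gcdn V t); split; rewrite -?U_sq -?V_sq //; last by lia.
by move: co_UV; rewrite {1}U_sq {1}V_sq coprime_pexpl // coprime_pexpr.
Qed.

(* Second half of a descent step: if s^2 = (p^2 + q^2)^2 + 4 * 2p^4 with p, q coprime,
   p^2 + q^2 odd and 3 not dividing q, then s = X + Y, Y = X + p^2 + q^2 with X, Y
   coprime and X Y = 2p^4, so p = m n where either X = 2m^4, Y = n^4, giving
   q^2 + m^2 n^2 + 2m^4 = n^4, or X = n^4, Y = 2m^4, which fails modulo 3. *)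
Lemma descent_lift (s p q : nat) :
  coprime p q -> ~~ (3 %| q) -> odd (p ^ 2 + q ^ 2) ->
  s ^ 2 = (p ^ 2 + q ^ 2) ^ 2 + 4 * (2 * p ^ 4) ->
  exists m n, [/\ p = m * n, coprime m n & q ^ 2 + m ^ 2 * n ^ 2 + 2 * m ^ 4 = n ^ 4].
Proof.
set A := p ^ 2 + q ^ 2 => co_pq q_ndvd3 A_odd s_sq.
have co_Ap : coprime A p.
  rewrite coprime_sym /coprime /A expnS expn1 gcdnMDl -/(coprime _ _).
  by rewrite coprime_pexpr.
have co_sA : coprime s A.
  apply: coprime_sq_add s_sq.
  by rewrite !coprimeMr (_ : 4 = 2 ^ 2) // !coprime_pexpr // coprimen2 A_odd co_Ap.
have [X [Y [co_XY XY_eq _ Y_eq]]] := coprime_sq_diff co_sA s_sq.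
have [m [n [p_eq co_mn _ [] [X_eq Y_eq']]]] :=
  coprime_split_prime (isT : prime 2) (isT : 0 < 4) co_XY XY_eq.
- exists m, n; split=> //.
  by rewrite -Y_eq' Y_eq X_eq /A p_eq expnMn; ring.
- have /negP := mod3_obstruction m n q_ndvd3; case; apply/eqP.
  by rewrite -Y_eq' Y_eq X_eq /A p_eq expnMn; ring.
Qed.

(* Writing r = 2k, the relation a^2 = b^2 + 4 * 3k^2 parametrises
   a = 3p^2 + q^2 and k = p q; then r^2 + s^2 = a^2 becomes
   s^2 = (p^2 + q^2)^2 + 4 * 2p^4, and the second half yields a solution (m, n, q)
   with m dividing p, hence 0 < m < r. *)
Lemma descent_step (r s t : nat) :
  0 < r -> coprime r s -> t ^ 2 + r ^ 2 * s ^ 2 + 2 * r ^ 4 = s ^ 4 ->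
  exists m n q, [/\ 0 < m < r, coprime m n & q ^ 2 + m ^ 2 * n ^ 2 + 2 * m ^ 4 = n ^ 4].
Proof.
move=> r_gt0 co_rs sol.
have [r_even s_odd [a [b [co_ab a_sq a_eq]]]] := descent_squares co_rs sol.
have [k r_eq] : exists k, r = 2 * k by exists r./2; have := even_halfK r_even; lia.
have a_eq' : a ^ 2 = b ^ 2 + 4 * (3 * k ^ 2) by rewrite a_eq r_eq; lia.
have [x [y [co_xy xy_eq a_xy _]]] := coprime_sq_diff co_ab a_eq'.
have [p [q [k_eq co_pq q_ndvd3 xy_cases]]] :=
  coprime_split_prime (isT : prime 3) (isT : 0 < 2) co_xy xy_eq.
have a_pq : a = 3 * p ^ 2 + q ^ 2 by case: xy_cases => -[x_eq y_eq]; lia.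
have s_sq : s ^ 2 = (p ^ 2 + q ^ 2) ^ 2 + 4 * (2 * p ^ 4).
  by apply: (@addnI (r ^ 2)); rewrite a_sq a_pq r_eq k_eq; ring.
have A_odd : odd (p ^ 2 + q ^ 2).
  have : odd (a ^ 2) by rewrite -a_sq oddD !oddX /= (negbTE r_even) s_odd.
  rewrite oddX /= (_ : a = p ^ 2 + q ^ 2 + 2 * p ^ 2); last by rewrite a_pq; lia.
  by rewrite oddD mul2n odd_double addbF.
have [m [n [p_eq co_mn sol']]] := descent_lift co_pq q_ndvd3 A_odd s_sq.
have r_mnq : r = 2 * m * (n * q) by rewrite r_eq k_eq p_eq; ring.
move: r_gt0; rewrite r_mnq muln_gt0 => /andP[]; rewrite muln_gt0 => /andP[_ m_gt0] nq_gt0.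
exists m, n, q; split=> //; rewrite m_gt0 (leq_ltn_trans (leq_pmulr m nq_gt0)) //.
by rewrite -mulnA ltn_Pmull // muln_gt0 m_gt0.
Qed.

Lemma no_descent_solution (r s t : nat) :
  0 < r -> coprime r s -> t ^ 2 + r ^ 2 * s ^ 2 + 2 * r ^ 4 != s ^ 4.
Proof.
elim/ltn_ind: r s t => r IH s t r_gt0 co_rs; apply/negP => /eqP sol.
have [m [n [q [/andP[m_gt0 m_lt_r] co_mn sol']]]] := descent_step r_gt0 co_rs sol.
by have /negP := IH m m_lt_r n q m_gt0 co_mn; rewrite sol' eqxx.
Qed.

(* For coprime R, S with R > 0, the number (R^2 + S^2) * |2R^2 - S^2| is not a square:
   modulo 4 when 2R^2 >= S^2, by descent otherwise. *)
Lemma sum_sq_mul_not_square (R S V M : nat) : 0 < R -> coprime R S ->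
  V + S ^ 2 = 2 * R ^ 2 \/ V + 2 * R ^ 2 = S ^ 2 -> (R ^ 2 + S ^ 2) * V != M ^ 2.
Proof.
move=> R_gt0 co_RS [V_eq | V_eq]; apply/negP => /eqP sq.
- have RS_odd : odd R || odd S.
    by case: (boolP (odd R)) => //= /(coprime_even_odd co_RS).
  by have /negP := mod4_obstruction_plus M RS_odd; apply; apply/eqP; nia.
- by have /negP := no_descent_solution M R_gt0 co_RS; apply; apply/eqP; nia.
Qed.

Lemma nat_sq_div (c z m : nat) : 0 < z -> c * z ^ 2 = m ^ 2 -> exists k, c = k ^ 2.
Proof.
move=> z_gt0 sq.
have : z ^ 2 %| m ^ 2 by rewrite -sq dvdn_mull.
rewrite dvdn_pexp2r // => /dvdnP[k m_eq]; exists k.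
have z2_gt0 : 0 < z ^ 2 by rewrite expn_gt0 z_gt0.
by apply/eqP; rewrite -(eqn_pmul2r z2_gt0) sq m_eq expnMn.
Qed.

Local Open Scope ring_scope.

Lemma int_rat_sq (c : int) (x : rat) : c%:~R = x ^+ 2 -> exists k : int, c = k ^+ 2.
Proof.
move=> c_eq.
have c_ge0 : 0 <= c by rewrite -(@ler0z rat) c_eq sqr_ge0.
have cd_eq : c * (denq x) ^+ 2 = (numq x) ^+ 2.
  by apply: (@intr_inj rat); rewrite rmorphM !rmorphXn /= numqE c_eq; ring.
have [k k_eq] : exists k, `|c|%N = (k ^ 2)%N.
  apply: (@nat_sq_div _ `|denq x|%N `|numq x|%N); first by rewrite absz_gt0 denq_neq0.
  by rewrite -!abszX -abszM cd_eq.
by exists k%:Z; move: k_eq; lia.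
Qed.

Lemma not_square_abs (c k : int) :
  (forall M : nat, (`|c|%N != M ^ 2)%N) -> c != k ^+ 2.
Proof.
by move=> c_abs; apply/eqP => c_eq; have /eqP := c_abs `|k|%N; rewrite c_eq abszX.
Qed.

(* The three binary digits of an index i < 8 determine it; the element of S at index
   i has sign bit i_0, uses v rather than u iff i_2, and u - v rather than u + v iff i_1. *)
Lemma eight_bits (i : nat) : (i < 8)%N -> i = (odd i + 2 * odd i./2 + 4 * odd i./2./2)%N.
Proof. by case: i => [|[|[|[|[|[|[|[|i]]]]]]]]. Qed.

Lemma bits_xor_nontrivial (e a b e' a' b' : bool) :
  (e, a, b) != (e', a', b') -> [|| e (+) e', a (+) a' | b (+) b'].
Proof. by case: e e' a a' b b' => [] [] [] [] [] []. Qed.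

Section SquareClasses.

Variables r s : int.
Hypotheses (co_rs : coprimez r s) (r_neq0 : r != 0).

Let u := r ^+ 2 + s ^+ 2.
Let v := 2 * r ^+ 2 - s ^+ 2.
Let w := u - v.
Let uv_factor (a : bool) := if a then v else u.
Let sum_factor (b : bool) := if b then w else u + v.

Definition S_elem (e a b : bool) : int := (-1) ^+ e * (uv_factor a * sum_factor b).

Lemma nth_S_list (i : nat) : (i < 8)%N ->
  nth 0 (S_list r s) i = S_elem (odd i) (odd i./2./2) (odd i./2).
Proof.
by case: i => [|[|[|[|[|[|[|[|i]]]]]]]] // _; rewrite /S_elem /= ?(mul1r, mulN1r).
Qed.

(* Square class of the product of two elements whose bits differ by (e, a, b). *)
Definition sq_class (e a b : bool) : int := (-1) ^+ e * (u * v) ^+ a * (3 * w) ^+ b.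

(* Products of the factors, up to squares: u v, and (u + v)(u - v) = 3 w r^2. *)
Lemma uv_factor_mul a a' : uv_factor a * uv_factor a' =
  (u * v) ^+ (a (+) a') * (if a == a' then uv_factor a else 1) ^+ 2.
Proof. by case: a a' => [] []; rewrite /= ?expr0 ?expr1 ?mul1r ?mulr1 // mulrC. Qed.

Lemma sum_factor_mul b b' : sum_factor b * sum_factor b' =
  (3 * w) ^+ (b (+) b') * (if b == b' then sum_factor b else r) ^+ 2.
Proof.
have uv_sum : u + v = 3 * r ^+ 2 by rewrite /u /v; ring.
by case: b b' => [] []; rewrite /= ?expr0 ?expr1 ?mul1r ?uv_sum; ring.
Qed.

Lemma S_elem_mul e a b e' a' b' : S_elem e a b * S_elem e' a' b' =
  sq_class (e (+) e') (a (+) a') (b (+) b') *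
  ((if a == a' then uv_factor a else 1) * (if b == b' then sum_factor b else r)) ^+ 2.
Proof.
have -> : S_elem e a b * S_elem e' a' b' = (-1) ^+ e * (-1) ^+ e' *
    (uv_factor a * uv_factor a') * (sum_factor b * sum_factor b').
  by rewrite /S_elem; ring.
by rewrite uv_factor_mul sum_factor_mul /sq_class signr_addb; ring.
Qed.

Lemma abs_u : `|u|%N = (`|r| ^ 2 + `|s| ^ 2)%N.
Proof. by rewrite /u -!abszX; have := sqr_ge0 r; have := sqr_ge0 s; lia. Qed.

Lemma abs_v : (`|v| + `|s| ^ 2 = 2 * `|r| ^ 2 \/ `|v| + 2 * `|r| ^ 2 = `|s| ^ 2)%N.
Proof. by rewrite /v -!abszX; have := sqr_ge0 r; have := sqr_ge0 s; lia. Qed.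

(* 3 divides none of u, v, w: v = 3r^2 - u and w = 3s^2 - u. *)
Lemma u_ndvd3 : ~~ (3 %| u)%Z.
Proof. by rewrite dvdzE abs_u coprime_ndvd3_sum_sq. Qed.

Lemma ndvd3_shift (x y : int) : x = 3 * y - u -> ~~ (3 %| x)%Z.
Proof.
move=> x_eq; apply: contra u_ndvd3 => dvd3_x.
by rewrite (_ : u = 3 * y - x); [rewrite rpredB // dvdz_mulr | rewrite x_eq; ring].
Qed.

Lemma v_ndvd3 : ~~ (3 %| v)%Z.
Proof. by apply: (ndvd3_shift (y := r ^+ 2)); rewrite /v /u; ring. Qed.

Lemma w_ndvd3 : ~~ (3 %| w)%Z.
Proof. by apply: (ndvd3_shift (y := s ^+ 2)); rewrite /w /v /u; ring. Qed.

Lemma ndvd3_neq0 (x : int) : ~~ (3 %| x)%Z -> x != 0.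
Proof. by apply: contraNneq => ->; apply: dvdz0. Qed.

Lemma sq_class_not_square e a b : [|| e, a | b] -> forall k : int, sq_class e a b != k ^+ 2.
Proof.
have R_gt0 : (0 < `|r|)%N by rewrite absz_gt0.
have [u3 v3 w3] : [/\ ~~ (3 %| `|u|), ~~ (3 %| `|v|) & ~~ (3 %| `|w|)]%N.
  by split; [exact: u_ndvd3 | exact: v_ndvd3 | exact: w_ndvd3].
case: a; case: b; rewrite /sq_class ?expr0 ?expr1 ?mulr1 /= => e_a_b k.
- apply: not_square_abs => M; rewrite -mulrA abszMsign !abszM mulnCA.
  by apply: three_mul_not_square; rewrite !Euclid_dvdM // !negb_or u3 v3 w3.
- apply: not_square_abs => M; rewrite abszMsign abszM abs_u.
  exact: sum_sq_mul_not_square R_gt0 co_rs abs_v.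
- apply: not_square_abs => M; rewrite abszMsign abszM.
  exact: three_mul_not_square.
- rewrite orbF in e_a_b; rewrite e_a_b; apply/eqP => sq.
  by have := sqr_ge0 k; rewrite -sq.
Qed.

Lemma uv_factor_neq0 a : uv_factor a != 0.
Proof. by case: a; apply: ndvd3_neq0; [exact: v_ndvd3 | exact: u_ndvd3]. Qed.

Lemma sum_factor_neq0 b : sum_factor b != 0.
Proof.
case: b; first exact: ndvd3_neq0 w_ndvd3.
rewrite /sum_factor (_ : u + v = 3 * r ^+ 2) ?mulf_neq0 ?expf_neq0 //.
by rewrite /u /v; ring.
Qed.

Lemma S_elem_neq0 e a b : S_elem e a b != 0.
Proof. by rewrite /S_elem !mulf_neq0 ?signr_eq0 ?uv_factor_neq0 ?sum_factor_neq0. Qed.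

(* Elements with different bits lie in different square classes: otherwise their
   product would be a rational square, making its square class an integer square. *)
Lemma S_elem_not_sq_equiv e a b e' a' b' : (e, a, b) != (e', a', b') ->
  ~ sq_equiv (S_elem e a b)%:~R (S_elem e' a' b')%:~R.
Proof.
move=> /bits_xor_nontrivial nontrivial [q [q_neq0 q_eq]].
set z := (if a == a' then uv_factor a else 1) * (if b == b' then sum_factor b else r).
have z_neq0 : z != 0.
  rewrite mulf_neq0 //; [case: (a == a') | case: (b == b')] => //.
    exact: uv_factor_neq0.
  exact: sum_factor_neq0.
have [k k_eq] : exists k, sq_class (e (+) e') (a (+) a') (b (+) b') = k ^+ 2.
  apply: (@int_rat_sq _ ((S_elem e' a' b')%:~R * q / z%:~R)).
  have sq_eq : (S_elem e a b * S_elem e' a' b')%:~R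
      = ((S_elem e' a' b')%:~R * q) ^+ 2 :> rat.
    by rewrite intrM q_eq; ring.
  rewrite S_elem_mul -/z intrM rmorphXn /= in sq_eq.
  by rewrite expr_div_n -sq_eq mulfK // expf_neq0 // intr_eq0.
by move/negP: (sq_class_not_square nontrivial k); rewrite k_eq eqxx.
Qed.

End SquareClasses.

Theorem lemma6p2 :
  exists bad : seq (int * int),
    forall r s : int, coprimez r s -> r != 0 ->
      ~ distinct_sq_classes (map (fun z : int => z%:~R : rat) (S_list r s)) ->
      (r, s) \in bad.
Proof.
exists [::] => r s co_rs r_neq0 []; split.
- move=> x /mapP[z /(nthP 0)[i i_lt <-] ->]; rewrite intr_eq0 nth_S_list //.
  exact: S_elem_neq0.
- move=> i j; rewrite size_map => i_lt j_lt ij_neq.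
  rewrite !(nth_map 0) // !nth_S_list //.
  apply: S_elem_not_sq_equiv => //; apply: contra ij_neq => /eqP[ei ai bi].
  by rewrite (eight_bits i_lt) (eight_bits j_lt) ei ai bi.
Qed.
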